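(* Let $\psi$ be an injective map from the positive integers to the positive integers and let $A=\{\psi(n): n\ge 1\}$. Let $\alpha$ be a positive integer. For every nonnegative integer $n$, \[ p^{A}(n)=\sum_{(N_0,N_1,N_2,\dots)}\ \prod_{j\ge 0} p^{A}_{\alpha}(N_j), \] where the sum runs over all sequences $(N_0,N_1,N_2,\dots)$ of nonnegative integers satisfying $n=\sum_{i\ge 0}(\alpha+1)^{i}N_i$.
   Context: For a set $A$ of positive integers and a positive integer $\alpha$, $p^{A}_{\alpha}(n)$ denotes the number of partitions of $n$ into parts from $A$ in which each part occurs at most $\alpha$ times, and $p^{A}(n)$ denotes the number of partitions of $n$ into parts from $A$ with no restriction on multiplicities. By convention $p^{A}_{\alpha}(0)=p^{A}(0)=1$, so the product on the right is effectively finite. *)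

From mathcomp Require Import all_boot.
From mathcomp Require Import boolp.
Set Implicit Arguments. Unset Strict Implicit. Unset Printing Implicit Defensive.

Definition image_set (psi : nat -> nat) : pred nat :=
  fun a => `[< exists k, 0 < k /\ psi k = a >].

(* Number of partitions of n into parts from A (parts are positive), each
   multiplicity satisfying P.  A partition of n is encoded by its multiplicity
   function f : part i |-> f i, for parts i in {0..n}; multiplicities are at
   most n since parts are >= 1, so nothing is lost by the bound. *)
Definition part_count (A : pred nat) (P : nat -> bool) (n : nat) : nat :=
  #|[set f : {ffun 'I_n.+1 -> 'I_n.+1} |
      [forall i : 'I_n.+1, (nat_of_ord (f i) != 0) ==>
          [&& 0 < nat_of_ord i, A (nat_of_ord i) & P (nat_of_ord (f i))]]
      && (\sum_(i < n.+1) (nat_of_ord i) * (nat_of_ord (f i)) == n)]|.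

Definition pA (A : pred nat) (n : nat) : nat := part_count A predT n.

Definition pA_alpha (A : pred nat) (alpha n : nat) : nat :=
  part_count A (fun m => m <= alpha) n.

From mathcomp Require Import all_boot.
From mathcomp Require Import boolp.
Set Implicit Arguments. Unset Strict Implicit. Unset Printing Implicit Defensive.

(* Writing every multiplicity in base alpha+1, m_a = sum_j (alpha+1)^j d_(a,j)
   with digits d_(a,j) <= alpha, splits a partition of n into layers: the j-th
   layer uses the part a with multiplicity d_(a,j), so it is a partition with
   multiplicities at most alpha, of some size N_j, and n = sum_j (alpha+1)^j N_j.
   This is a bijection, and sorting layer sequences by their sizes (N_j) gives
   the product formula.  Multiplicity functions of all layers live in the common
   box 'I_n.+1, so each p^A_alpha(N_j) has to be recounted inside that box. *)

Definition digit (b j x : nat) : nat := (x %/ b ^ j) %% b.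

Lemma digitS b j x : digit b j.+1 x = digit b j (x %/ b).
Proof. by rewrite /digit expnS divnMA. Qed.

Lemma digit_le b j x : digit b j x <= x.
Proof. exact: leq_trans (leq_mod _ _) (leq_div _ _). Qed.

Lemma sum_digits b K x : \sum_(j < K) b ^ j * digit b j x = x %% b ^ K.
Proof.
elim: K => [|K IHK]; first by rewrite big_ord0 expn0 modn1.
rewrite big_ord_recr /= IHK /digit modn_divl -expnS.
rewrite -(modn_dvdm x (dvdn_exp2l b (leqnSn K))).
by rewrite addnC mulnC -divn_eq.
Qed.

Lemma digit_expansion b K (d : nat -> nat) j : (forall k, d k < b) -> j < K ->
  digit b j (\sum_(k < K) b ^ k * d k) = d j.
Proof.
elim: K d j => [|K IHK] d j d_lt //.
rewrite big_ord_recl /= expn0 mul1n.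
under eq_bigr => i _ do rewrite /bump /= add1n expnS -mulnA.
have b_gt0 : 0 < b by apply: leq_ltn_trans (d_lt 0).
rewrite -big_distrr /=; case: j => [_|j j_lt].
  by rewrite /digit expn0 divn1 addnC mulnC modnMDl modn_small.
rewrite digitS mulnC addnC divnMDl // divn_small // addn0.
exact: (IHK (fun k => d k.+1)).
Qed.

Lemma card_in_bij (T U : finType) (A : {set T}) (B : {set U}) (f : T -> U) (g : U -> T) :
  {in A, forall x, f x \in B} -> {in B, forall y, g y \in A} ->
  {in A, cancel f g} -> {in B, cancel g f} -> #|A| = #|B|.
Proof.
move=> fAB gBA fK gK; rewrite -(card_in_imset (can_in_inj fK)).
suff -> : f @: A = B by [].
apply/setP => y; apply/imsetP/idP => [[x xA ->]|yB]; first exact: fAB.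
by exists (g y); rewrite ?gK ?gBA.
Qed.

Lemma sum_prod_card_fibres (I T U : finType) (ok : pred T) (w : T -> U)
    (c : pred {ffun I -> U}) :
  \sum_(N | c N) \prod_j #|[set g | ok g && (w g == N j)]| =
  #|[set G : {ffun I -> T} | [forall j, ok (G j)] && c [ffun j => w (G j)]]|.
Proof.
rewrite -sum1dep_card.
rewrite (partition_big (fun G : {ffun I -> T} => [ffun j => w (G j)]) c) /=; last first.
  by move=> G /andP[].
apply: eq_bigr => N cN.
rewrite (eq_bigr (fun j => \sum_(g | ok g && (w g == N j)) 1)); last first.
  by move=> j _; rewrite sum1dep_card.
rewrite bigA_distr_big_dep; under eq_bigr do rewrite big1_eq.
apply: eq_bigl => G; apply/familyP/idP => [fibG | ].
  have wG : [ffun j => w (G j)] = N.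
    by apply/ffunP => j; rewrite ffunE; case/andP: (fibG j) => _ /eqP.
  by rewrite wG cN eqxx !andbT; apply/forallP => j; case/andP: (fibG j).
case/andP=> /andP[/forallP okG _] /eqP <- j.
by rewrite ffunE unfold_in okG eqxx.
Qed.

Local Notation multfun K := {ffun 'I_K.+1 -> 'I_K.+1}.

Section MultiplicityFunctions.

Variables (A : pred nat) (P : pred nat).

Definition admissible K (f : multfun K) : bool :=
  [forall i : 'I_K.+1, (f i != 0 :> nat) ==> [&& 0 < i, A i & P (f i)]].

Definition weight K (f : multfun K) : nat := \sum_(i < K.+1) i * f i.

Definition partitions K m : {set multfun K} :=
  [set f | admissible f && (weight f == m)].

Lemma part_countE m : part_count A P m = #|partitions m m|.
Proof. by []. Qed.

Definition mult K (f : multfun K) (i : nat) : nat :=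
  oapp (fun j : 'I_K.+1 => val (f j)) 0 (insub i).

Lemma mult_ord K (f : multfun K) (i : 'I_K.+1) : mult f i = f i.
Proof. by rewrite /mult valK. Qed.

Lemma mult_out K (f : multfun K) i : K < i -> mult f i = 0.
Proof. by move=> K_lt_i; rewrite /mult insubN // -leqNgt. Qed.

Lemma mult_inj K (f g : multfun K) : mult f =1 mult g -> f = g.
Proof. by move=> fg; apply/ffunP => i; apply: val_inj => /=; rewrite -!mult_ord fg. Qed.

Lemma admissibleP K (f : multfun K) :
  reflect (forall i, mult f i != 0 -> [&& 0 < i, A i & P (mult f i)]) (admissible f).
Proof.
apply: (iffP forallP) => [adm_f i | adm_f i]; last first.
  by rewrite -(mult_ord f i); apply/implyP/adm_f.
have [K_lt_i|i_le_K] := ltnP K i; first by rewrite mult_out ?eqxx.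
by have := adm_f (Ordinal (i_le_K : i < K.+1)); rewrite -(mult_ord f) => /implyP.
Qed.

Lemma weight_mult K (f : multfun K) B : K < B -> weight f = \sum_(i < B) i * mult f i.
Proof.
move=> K_lt_B; rewrite /weight (eq_bigr (fun i : 'I_K.+1 => i * mult f i)); last first.
  by move=> i _; rewrite mult_ord.
rewrite (big_ord_widen B (fun i => i * mult f i) K_lt_B) big_mkcond /=.
apply: eq_bigr => i _; case: ifP => // /negbT; rewrite -leqNgt => /mult_out ->.
by rewrite muln0.
Qed.

Lemma eq_admissible K K' (f : multfun K) (g : multfun K') :
  mult f =1 mult g -> admissible f = admissible g.
Proof.
move=> fg; apply/admissibleP/admissibleP => adm i.
  by rewrite -!fg; apply: adm.
by rewrite !fg; apply: adm.
Qed.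

Lemma eq_weight K K' (f : multfun K) (g : multfun K') :
  mult f =1 mult g -> weight f = weight g.
Proof.
move=> fg; rewrite (@weight_mult _ f (maxn K K').+1) ?ltnS ?leq_maxl //.
rewrite (@weight_mult _ g (maxn K K').+1) ?ltnS ?leq_maxr //.
by apply: eq_bigr => i _; rewrite fg.
Qed.

Lemma leq_weight K (f : multfun K) (i : 'I_K.+1) : i * f i <= weight f.
Proof. by rewrite /weight (bigD1 i) ?leq_addr. Qed.

Lemma admissible_mult_le K (f : multfun K) i :
  admissible f -> mult f i != 0 -> i <= weight f /\ mult f i <= weight f.
Proof.
move=> /admissibleP adm_f fi_neq0; have /andP[i_gt0 _] := adm_f i fi_neq0.
have [K_lt_i|i_le_K] := ltnP K i; first by rewrite mult_out ?eqxx in fi_neq0.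
have := leq_weight f (Ordinal (i_le_K : i < K.+1)); rewrite -(mult_ord f) /= => term_le.
by split; apply: leq_trans term_le; rewrite ?leq_pmulr ?leq_pmull // lt0n.
Qed.

Definition resize K K' (f : multfun K) : multfun K' :=
  [ffun i : 'I_K'.+1 => inord (mult f i)].

Lemma mult_resize K K' (f : multfun K) :
  admissible f -> weight f <= K' -> mult (resize K' f) =1 mult f.
Proof.
move=> adm_f wf_le i; have [K'_lt_i|i_le_K'] := ltnP K' i.
  rewrite mult_out //; case: (eqVneq (mult f i) 0) => // /(admissible_mult_le adm_f)[i_le _].
  by move: K'_lt_i; rewrite ltnNge (leq_trans i_le wf_le).
rewrite -[i]/(nat_of_ord (Ordinal (i_le_K' : i < K'.+1))) mult_ord ffunE inordK // ltnS.
have [->|/(admissible_mult_le adm_f)[_ fi_le]] := eqVneq (mult f i) 0; first by [].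
exact: leq_trans wf_le.
Qed.

Lemma resize_partitions K K' m (f : multfun K) : m <= K' -> f \in partitions K m ->
  mult (resize K' f) =1 mult f /\ resize K' f \in partitions K' m.
Proof.
move=> m_le_K'; rewrite !inE => /andP[adm_f /eqP wf].
have wf_le : weight f <= K' by rewrite wf.
have fK := mult_resize adm_f wf_le.
by rewrite (eq_admissible fK) (eq_weight fK) adm_f wf eqxx.
Qed.

Lemma card_partitions_resize K K' m : m <= K -> m <= K' ->
  #|partitions K m| = #|partitions K' m|.
Proof.
move=> m_le_K m_le_K'; apply: (card_in_bij (f := resize K') (g := resize K)).
- by move=> f /(resize_partitions m_le_K') [].
- by move=> f /(resize_partitions m_le_K) [].
- move=> f f_in; have [fK f'_in] := resize_partitions m_le_K' f_in.
  by have [f'K _] := resize_partitions m_le_K f'_in; apply: mult_inj => i; rewrite f'K fK.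
- move=> f f_in; have [fK f'_in] := resize_partitions m_le_K f_in.
  by have [f'K _] := resize_partitions m_le_K' f'_in; apply: mult_inj => i; rewrite f'K fK.
Qed.

Lemma part_count_resize m K : m <= K -> part_count A P m = #|partitions K m|.
Proof. by move=> m_le_K; rewrite part_countE (card_partitions_resize (leqnn m) m_le_K). Qed.

End MultiplicityFunctions.

Section BaseExpansion.

Variables (A : pred nat) (alpha n : nat).
Hypothesis alpha_gt0 : 0 < alpha.

Local Notation b := alpha.+1.
Local Notation small := (fun m : nat => m <= alpha).
Local Notation layered := {ffun 'I_n.+1 -> multfun n}.

Definition layers (f : multfun n) : layered :=
  [ffun j : 'I_n.+1 => [ffun i => inord (digit b j (f i))]].

Definition stack (G : layered) : multfun n :=
  [ffun i : 'I_n.+1 => inord (\sum_(j < n.+1) b ^ j * G j i)].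

Definition layered_partitions : {set layered} :=
  [set G : layered | [forall j, admissible A small (G j)] &&
           (\sum_(j < n.+1) b ^ j * weight (G j) == n)].

Lemma layersE f j i : layers f j i = digit b j (f i) :> nat.
Proof. by rewrite !ffunE inordK // ltnS (leq_trans (digit_le _ _ _)) // -ltnS. Qed.

Lemma weight_stack_sum (G : layered) :
  \sum_(i < n.+1) i * (\sum_(j < n.+1) b ^ j * G j i) =
  \sum_(j < n.+1) b ^ j * weight (G j).
Proof.
under eq_bigr => i _ do rewrite big_distrr.
rewrite exchange_big; apply: eq_bigr => j _; rewrite big_distrr.
by apply: eq_bigr => i _ /=; rewrite mulnCA.
Qed.

Lemma stack_sum_le G i : G \in layered_partitions -> \sum_(j < n.+1) b ^ j * G j i <= n.
Proof.
rewrite inE => /andP[/forallP adm_G /eqP sum_wG]; have [i0|i_gt0] := posnP i.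
  rewrite big1 // => j _; have /forallP/(_ i) := adm_G j; rewrite i0 /=.
  by case: eqP => [->|//]; rewrite muln0.
apply: leq_trans (leq_pmull _ i_gt0) _.
rewrite -[X in _ <= X]sum_wG big_distrr leq_sum // => j _.
by rewrite /= mulnCA leq_mul2l leq_weight orbT.
Qed.

Lemma stackE G i :
  G \in layered_partitions -> stack G i = \sum_(j < n.+1) b ^ j * G j i :> nat.
Proof. by move=> G_in; rewrite ffunE inordK // ltnS stack_sum_le. Qed.

Lemma layers_in f : f \in partitions A predT n n -> layers f \in layered_partitions.
Proof.
rewrite !inE => /andP[/forallP adm_f /eqP wf]; apply/andP; split.
  apply/forallP => j; apply/forallP => i; rewrite layersE; apply/implyP => digit_neq0.
  have /implyP := adm_f i; case: eqP => [fi0|_ /(_ isT) /and3P[-> -> _]].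
    by rewrite fi0 /digit div0n mod0n in digit_neq0.
  by rewrite /= -ltnS ltn_pmod.
rewrite -weight_stack_sum -[X in _ == X]wf; apply/eqP/eq_bigr => i _; congr (_ * _).
under eq_bigr do rewrite layersE.
rewrite sum_digits modn_small //.
exact: leq_trans (ltn_ord (f i)) (ltnW (ltn_expl _ _)).
Qed.

Lemma stack_in G : G \in layered_partitions -> stack G \in partitions A predT n n.
Proof.
move=> G_in; have /[!inE]/andP[/forallP adm_G sum_wG] := G_in.
apply/andP; split.
  apply/forallP => i; apply/implyP; rewrite stackE //.
  rewrite sum_nat_eq0 negb_forall => /existsP[j].
  rewrite muln_eq0 negb_or => /andP[_ Gji_neq0].
  by have /forallP/(_ i)/implyP/(_ Gji_neq0)/and3P[-> -> _] := adm_G j.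
rewrite /weight; under eq_bigr => i _ do rewrite stackE //.
by rewrite weight_stack_sum.
Qed.

Lemma layersK : {in partitions A predT n n, cancel layers stack}.
Proof.
move=> f f_in; apply/ffunP => i; apply: val_inj => /=.
rewrite stackE ?layers_in //; under eq_bigr do rewrite layersE.
by rewrite sum_digits modn_small // (leq_trans (ltn_ord (f i))) // ltnW // ltn_expl.
Qed.

Lemma stackK : {in layered_partitions, cancel stack layers}.
Proof.
move=> G G_in; apply/ffunP => j; apply/ffunP => i; apply: val_inj => /=.
rewrite layersE stackE //.
rewrite (eq_bigr (fun k : 'I_n.+1 => b ^ k * G (inord k) i)); last first.
  by move=> k _; rewrite inord_val.
rewrite (@digit_expansion b n.+1 (fun k => G (inord k) i)) ?inord_val // => k.
case: (eqVneq (G (inord k) i : nat) 0) => [->//|Gki_neq0].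
move: G_in; rewrite inE => /andP[/forallP adm_G _].
by have /forallP/(_ i)/implyP/(_ Gki_neq0)/and3P[_ _] := adm_G (inord k).
Qed.

Lemma card_layered_partitions : #|partitions A predT n n| = #|layered_partitions|.
Proof. exact: card_in_bij layers_in stack_in layersK stackK. Qed.

Definition bounded_small (g : multfun n) : bool :=
  admissible A small g && (weight g <= n).

Definition weight_ord (g : multfun n) : 'I_n.+1 := inord (weight g).

Lemma layered_partitionsE : layered_partitions =
  [set G : layered | [forall j, bounded_small (G j)] &&
                     (\sum_(i < n.+1) b ^ i * [ffun j => weight_ord (G j)] i == n)].
Proof.
apply/setP => G; rewrite !inE.
have weight_ordE j : weight (G j) <= n -> weight_ord (G j) = weight (G j) :> nat.
  by move=> wG_le; rewrite inordK.
apply/andP/andP => [[/forallP adm_G /eqP sum_wG] | [/forallP bnd_G /eqP sum_wG]].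
  have wG_le j : weight (G j) <= n.
    rewrite -[X in _ <= X]sum_wG (bigD1 j) //= (leq_trans _ (leq_addr _ _)) //.
    by rewrite leq_pmull // expn_gt0.
  split; first by apply/forallP => j; rewrite /bounded_small adm_G wG_le.
  by rewrite -[X in _ == X]sum_wG; apply/eqP/eq_bigr => j _; rewrite ffunE weight_ordE.
split; first by apply/forallP => j; case/andP: (bnd_G j).
rewrite -[X in _ == X]sum_wG; apply/eqP/eq_bigr => j _; rewrite ffunE weight_ordE //.
by case/andP: (bnd_G j).
Qed.

Lemma bounded_small_fibre (N : 'I_n.+1) :
  [set g | bounded_small g && (weight_ord g == N)] = partitions A small n N.
Proof.
apply/setP => g; rewrite !inE /bounded_small -andbA; congr (_ && _).
have [wg_le|wg_gt] := leqP (weight g) n; first by rewrite -val_eqE /= inordK.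
by apply/esym/negbTE; apply: contraTneq wg_gt => ->; rewrite -leqNgt -ltnS.
Qed.

Lemma pA_base_expansion :
  pA A n = \sum_(N : {ffun 'I_n.+1 -> 'I_n.+1} | \sum_(i < n.+1) b ^ i * N i == n)
              \prod_(j < n.+1) pA_alpha A alpha (N j).
Proof.
rewrite /pA part_countE card_layered_partitions layered_partitionsE.
rewrite -(sum_prod_card_fibres bounded_small weight_ord
            (fun N => \sum_(i < n.+1) b ^ i * N i == n)).
apply: eq_bigr => N _; apply: eq_bigr => j _.
by rewrite bounded_small_fibre /pA_alpha (part_count_resize _ _ (ltnSE (ltn_ord (N j)))).
Qed.

End BaseExpansion.

Theorem mainTheorem2 (psi : nat -> nat)
    (psi_pos : forall k, 0 < k -> 0 < psi k)
    (psi_inj : forall k l, 0 < k -> 0 < l -> psi k = psi l -> k = l)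
    (alpha : nat) (alpha_pos : 0 < alpha) (n : nat) :
  pA (image_set psi) n =
  \sum_(N : {ffun 'I_n.+1 -> 'I_n.+1} |
          \sum_(i < n.+1) alpha.+1 ^ (nat_of_ord i) * nat_of_ord (N i) == n)
     \prod_(j < n.+1) pA_alpha (image_set psi) alpha (nat_of_ord (N j)).
Proof. exact: pA_base_expansion. Qed.
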